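(* Let $n$ be a positive integer and let $R_3(n)$ denote the number of reduced $3\times n$ Latin rectangles. Define \[ g(t_{00},t_{10},t_{01},t_{11}) = (t_{00}+t_{10})(t_{00}+t_{01}) - t_{00}. \] Then \begin{eqnarray*} R_3(n)&=& \sum_{s_{00}+s_{10}+s_{01}+s_{11}=n} (-1)^{s_{10}+s_{01}+2s_{11}} \frac{n!}{s_{00}!\,s_{10}!\,s_{01}!\,s_{11}!} \\&&\cdot\; g(s_{00}-1,s_{10},s_{01},s_{11}+1)^{s_{00}}\, g(s_{00},s_{10}-1,s_{01},s_{11}+1)^{s_{10}} \\&&\cdot\; g(s_{00},s_{10},s_{01}-1,s_{11}+1)^{s_{01}}\, g(s_{00},s_{10},s_{01},s_{11})^{s_{11}}, \end{eqnarray*} where the sum runs over all quadruples of nonnegative integers $(s_{00},s_{10},s_{01},s_{11})$ with sum $n$.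
   Context: A $k\times n$ Latin rectangle is a $k\times n$ matrix with entries in $\{1,\dots,n\}$ such that no row and no column contains a repeated entry (so each row is a permutation of $\{1,\dots,n\}$). It is reduced if its first row is $1,2,\dots,n$ in order. The convention $x^0=1$ for every integer $x$ (including $0^0=1$) is used. *)

From mathcomp Require Import all_boot all_order all_algebra.
Set Implicit Arguments. Unset Strict Implicit. Unset Printing Implicit Defensive.
Import GRing.Theory Num.Theory.
Local Open Scope ring_scope.

(* A k x n Latin rectangle on symbols {0,...,n-1} (i.e. {1..n} shifted by one):
   entries L (i,j), rows and columns without repetition. *)
Definition latin_rect (k n : nat) (L : {ffun 'I_k * 'I_n -> 'I_n}) : bool :=
  [forall i, forall j1, forall j2, (L (i, j1) == L (i, j2)) ==> (j1 == j2)] &&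
  [forall j, forall i1, forall i2, (L (i1, j) == L (i2, j)) ==> (i1 == i2)].

Definition reduced_latin_rect (k n : nat) (L : {ffun 'I_k * 'I_n -> 'I_n}) : bool :=
  latin_rect L && [forall i : 'I_k, forall j : 'I_n,
                     (val i == 0%N) ==> (val (L (i, j)) == val j)].

Definition R (k n : nat) : nat := #|[pred L : {ffun 'I_k * 'I_n -> 'I_n} | reduced_latin_rect L]|.

Definition g (t00 t10 t01 t11 : int) : int := (t00 + t10) * (t00 + t01) - t00.

(* A reduced 3 x n Latin rectangle is the same as a map r : j |-> (r1 j, r2 j)
   whose two coordinates are permutations and such that j, r1 j, r2 j are
   pairwise distinct.  Surjectivity of r1 and r2 is expanded by
   inclusion-exclusion: every symbol y receives a color (b1, b2) in {0,1}^2,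
   with sign (-1)^(b1 + b2), and must avoid the image of r1 if b1 holds and the
   image of r2 if b2 holds.  For a fixed coloring the remaining constraints are
   local in j, so the count is a product over the columns j of the number of
   admissible pairs (r1 j, r2 j); this number only depends on the color t of j
   and on the sizes s = (s00, s10, s01, s11) of the color classes, and equals
   g(s - e_t + e_11).  Grouping the colorings by s produces the multinomial
   coefficient. *)

From mathcomp Require Import all_boot all_order all_algebra zify ring.
Import GRing.Theory Num.Theory.
Set Implicit Arguments. Unset Strict Implicit. Unset Printing Implicit Defensive.

Section Fibers.

Variable T : finType.

Definition fiber_card (aT : finType) (c : {ffun aT -> T}) (t : T) : nat :=
  #|[set x | c x == t]|.

Lemma fiber_cardE (aT : finType) (c : {ffun aT -> T}) t :
  fiber_card c t = \sum_x (c x == t).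
Proof. by rewrite /fiber_card -sum1dep_card big_mkcond. Qed.

Lemma sum_fiber_card (aT : finType) (c : {ffun aT -> T}) :
  \sum_t fiber_card c t = #|aT|.
Proof.
rewrite -sum1_card (partition_big c predT) //=.
by apply: eq_bigr => t _; rewrite sum1dep_card.
Qed.

Lemma fiber_card_le (aT : finType) (c : {ffun aT -> T}) t : fiber_card c t <= #|aT|.
Proof. exact: max_card. Qed.

Lemma prod_fibers (R : comPzSemiRingType) (aT : finType) (c : {ffun aT -> T}) (F : T -> R) :
  (\prod_x F (c x) = \prod_t F t ^+ fiber_card c t)%R.
Proof.
rewrite (partition_big c predT) //=; apply: eq_bigr => t _.
by rewrite -prodr_const; apply: eq_big => [x|x /eqP ->]; rewrite ?inE.
Qed.

Definition ffun_cons m (x : T) (c : {ffun 'I_m -> T}) : {ffun 'I_m.+1 -> T} :=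
  [ffun i => if unlift ord0 i is Some j then c j else x].

Lemma fiber_card_cons m x (c : {ffun 'I_m -> T}) t :
  fiber_card (ffun_cons x c) t = (x == t) + fiber_card c t.
Proof.
rewrite !fiber_cardE big_ord_recl !ffunE unlift_none; congr addn.
by apply: eq_bigr => j _; rewrite ffunE liftK.
Qed.

Definition with_fibers m (s : T -> nat) :=
  [set c : {ffun 'I_m -> T} | [forall t, fiber_card c t == s t]].

Lemma ffun_cons_bij m : bijective (fun p : T * {ffun 'I_m -> T} => ffun_cons p.1 p.2).
Proof.
exists (fun c : {ffun 'I_m.+1 -> T} => (c ord0, [ffun j => c (lift ord0 j)])).
  move=> [x c] /=; rewrite ffunE unlift_none; congr pair.
  by apply/ffunP => j; rewrite !ffunE liftK.
move=> c; apply/ffunP => i; rewrite ffunE /=.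
by case: unliftP => [j ->|->]; rewrite ?ffunE.
Qed.

Lemma card_with_fibersS m s : #|with_fibers m.+1 s| =
  \sum_(x | 0 < s x) #|with_fibers m (fun t => s t - (x == t))|.
Proof.
have [cons_inv consK invK] := ffun_cons_bij m.
rewrite -sum1_card (reindex _ (onW_bij _ (Bijective consK invK))) /= big_mkcond.
rewrite -(pair_bigA _ (fun x c => if ffun_cons x c \in with_fibers m.+1 s then 1 else 0)) /=.
rewrite [RHS]big_mkcond; apply: eq_bigr => x _; rewrite -big_mkcond /= sum1dep_card.
case: posnP => [sx0 | sx_gt0].
  apply: eq_card0 => c; rewrite !inE; apply/negP => /forallP/(_ x)/eqP.
  by rewrite fiber_card_cons eqxx sx0.
apply: eq_card => c; rewrite !inE; apply: eq_forallb => t.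
rewrite fiber_card_cons; case: (x =P t) => [<- | _]; last by rewrite subn0.
by rewrite add1n; apply/eqP/eqP; lia.
Qed.

Lemma card_with_fibers_fact m s :
  \sum_t s t = m -> #|with_fibers m s| * \prod_t (s t)`! = m`!.
Proof.
elim: m s => [|m IHm] s sum_s.
  have s0 t : s t = 0 by apply/eqP; rewrite -leqn0 -sum_s (bigD1 t) ?leq_addr.
  rewrite big1 => [|t _]; last by rewrite s0.
  suff -> : with_fibers 0 s = setT by rewrite muln1 cardsT card_ffun card_ord.
  apply/setP => c; rewrite !inE; apply/forallP => t.
  by rewrite fiber_cardE big_ord0 s0.
rewrite card_with_fibersS big_distrl /=.
rewrite (eq_bigr (fun x => s x * m`!)) => [|x sx_gt0]; last first.
  pose s' t := s t - (x == t).
  have sum_s' : \sum_t s' t = m.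
    move: sum_s; rewrite (bigD1 x) //= [\sum_t s' t](bigD1 x) //= /s' eqxx.
    rewrite [\sum_(i | _) (s i - _)](eq_bigr s) => [|t]; first by rewrite subn1; lia.
    by rewrite eq_sym => /negPf ->; rewrite subn0.
  rewrite -(IHm s' sum_s') mulnCA; congr muln.
  rewrite (bigD1 x) //= [in RHS](bigD1 x) //= /s' eqxx mulnA.
  congr muln; first by case: (s x) sx_gt0 => // k _; rewrite factS subn1.
  by apply: eq_bigr => t; rewrite eq_sym => /negPf ->; rewrite subn0.
rewrite -big_distrl /= factS; congr muln.
by rewrite big_mkcond -sum_s; apply: eq_bigr => x _; case: posnP.
Qed.

Lemma card_with_fibers m s : #|with_fibers m s| =
  if \sum_t s t == m then m`! %/ \prod_t (s t)`! else 0.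
Proof.
case: eqP => [sum_s | sum_ne].
  by rewrite -(card_with_fibers_fact sum_s) mulnK // prodn_gt0 // => t; apply: fact_gt0.
apply: eq_card0 => c; rewrite !inE; apply/negP => /forallP fib_c; apply: sum_ne.
by rewrite -(card_ord m) -(sum_fiber_card c); apply: eq_bigr => t _; rewrite (eqP (fib_c t)).
Qed.

Lemma card_preim_fibers (aT : finType) (c : {ffun aT -> T}) (P : pred T) :
  #|[set x | P (c x)]| = \sum_(t | P t) fiber_card c t.
Proof.
rewrite -sum1dep_card (partition_big c P) //=; apply: eq_bigr => t Pt.
rewrite sum1dep_card; apply: eq_card => x; rewrite !inE.
by case: eqP => [-> | _]; rewrite ?Pt ?andbF.
Qed.

Lemma card_preim_fibersD1 (aT : finType) (c : {ffun aT -> T}) (P : pred T) j :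
  #|[set x | P (c x)] :\ j| + P (c j) = \sum_(t | P t) fiber_card c t.
Proof. by rewrite -card_preim_fibers [RHS](cardsD1 j) inE addnC. Qed.

End Fibers.

Lemma forall_andb (T : finType) (P Q : pred T) :
  [forall x, P x && Q x] = [forall x, P x] && [forall x, Q x].
Proof.
apply/forallP/andP => [PQ | [/forallP P_ /forallP Q_] x]; last by rewrite P_ Q_.
by split; apply/forallP => x; case/andP: (PQ x).
Qed.

Lemma forall_pair_bool (P : pred (bool * bool)) :
  [forall t, P t] = [&& P (false, false), P (true, false), P (false, true) & P (true, true)].
Proof. by apply/forallP/and4P => [P_ | [? ? ? ?] [[] []]] //; split; apply: P_. Qed.

Lemma forall_injectiveb (T : finType) (U : eqType) (f : T -> U) :
  [forall x, forall y, (f x == f y) ==> (x == y)] = injectiveb f.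
Proof.
apply/forallP/injectiveP => [f_inj x y fxy | f_inj x].
  by apply/eqP; move/forallP: (f_inj x) => /(_ y); rewrite fxy eqxx.
by apply/forallP => y; apply/implyP => /eqP /f_inj ->.
Qed.

Lemma injectiveb_codom (T : finType) (f : T -> T) : injectiveb f = [forall y, y \in codom f].
Proof.
apply/injectiveP/forallP => [f_inj y | f_onto]; first exact: injF_onto.
apply: in2T; apply/image_injP; apply/eqP/eq_card => y.
by rewrite f_onto.
Qed.

Lemma forall_notin_codom (I T : finType) (f : I -> T) (P : pred T) :
  [forall y, P y ==> (y \notin codom f)] = [forall i, ~~ P (f i)].
Proof.
apply/forallP/forallP => [P_out i | P_f y].
  by apply/negP => /(implyP (P_out (f i))); rewrite codom_f.
by apply/implyP => Py; apply/codomP => -[i Ey]; move: (P_f i); rewrite -Ey Py.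
Qed.

Lemma card_distinct_pairs (T : finType) (A B : {set T}) :
  #|[set p in setX A B | p.1 != p.2]| + #|A :&: B| = #|A| * #|B|.
Proof.
rewrite -cardsX -(cardsID [set p | p.1 == p.2] (setX A B)) addnC; congr addn.
  have diag_inj : injective (fun x : T => (x, x)) by move=> x y [].
  rewrite -(card_imset _ diag_inj); apply: eq_card => -[x y]; rewrite !inE /=.
  apply/imsetP/andP => [[z] | [/andP [xA yB] /eqP xy]]; last by subst y; exists x; rewrite ?inE ?xA.
  by rewrite inE => /andP [zA zB] [-> ->]; rewrite zA zB eqxx.
by apply: eq_card => -[x y]; rewrite !inE /= andbC.
Qed.

Lemma card_ffun_family (I J : finType) (A : I -> {set J}) :
  #|[set f : {ffun I -> J} | [forall i, f i \in A i]]| = \prod_i #|A i|.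
Proof. by rewrite -cardsXn; apply: eq_card => f; rewrite !inE. Qed.

Lemma big_pair_bool (R : Type) (idx : R) (op : Monoid.com_law idx) (F : bool * bool -> R) :
  \big[op/idx]_t F t =
  op (op (F (true, true)) (F (true, false))) (op (F (false, true)) (F (false, false))).
Proof.
transitivity (\big[op/idx]_a \big[op/idx]_b F (a, b)); last by rewrite !big_bool.
by rewrite pair_bigA; apply: eq_bigr => -[].
Qed.

Lemma latin_rectP k m (L : {ffun 'I_k * 'I_m -> 'I_m}) :
  reflect ((forall i, injective (fun j => L (i, j))) /\ (forall j, injective (fun i => L (i, j))))
          (latin_rect L).
Proof.
apply: (iffP andP) => [[/forallP rows /forallP cols] | [rows cols]].
  by split=> [i | j]; apply/injectiveP; rewrite -forall_injectiveb; [exact: rows | exact: cols].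
split; apply/forallP => x; rewrite forall_injectiveb; apply/injectiveP.
  exact: rows.
exact: cols.
Qed.

Section ProperRows.

Variable Y : finType.
Implicit Types (r : {ffun Y -> Y * Y}) (c : {ffun Y -> bool * bool}).

Definition distinct_columns r :=
  [forall j, [&& (r j).1 != j, (r j).2 != j & (r j).1 != (r j).2]].

Definition proper_rows r :=
  [&& injectiveb (fun j => (r j).1), injectiveb (fun j => (r j).2) & distinct_columns r].

Definition allowed_pairs c (j : Y) : {set Y * Y} :=
  [set p | [&& p.1 != j, p.2 != j, p.1 != p.2, ~~ (c p.1).1 & ~~ (c p.2).2]].

Lemma proper_rowsE r : proper_rows r = distinct_columns r &&
  [forall y, (y \in codom (fun j => (r j).1)) && (y \in codom (fun j => (r j).2))].
Proof. by rewrite /proper_rows !injectiveb_codom forall_andb andbA andbC. Qed.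

Lemma forall_allowed_pairs c r :
  distinct_columns r && [forall y, ((c y).1 ==> (y \notin codom (fun j => (r j).1)))
                                && ((c y).2 ==> (y \notin codom (fun j => (r j).2)))]
  = [forall j, r j \in allowed_pairs c j].
Proof.
rewrite forall_andb !forall_notin_codom /distinct_columns -!forall_andb.
by apply: eq_forallb => j; rewrite inE -!andbA.
Qed.

End ProperRows.

Section Rectangles.

Variable n : nat.
Implicit Types (r : {ffun 'I_n -> 'I_n * 'I_n}) (L : {ffun 'I_3 * 'I_n -> 'I_n}).

Definition rect_of_rows r : {ffun 'I_3 * 'I_n -> 'I_n} :=
  [ffun ij => tnth [tuple ij.2; (r ij.2).1; (r ij.2).2] ij.1].

Definition rows_of_rect L : {ffun 'I_n -> 'I_n * 'I_n} :=
  [ffun j => (L (@Ordinal 3 1 isT, j), L (@Ordinal 3 2 isT, j))].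

Lemma rect_of_rowsK : cancel rect_of_rows rows_of_rect.
Proof. by move=> r; apply/ffunP => j; rewrite !ffunE /tnth /=; case: (r j). Qed.

Lemma reduced_rect_of_rows r : reduced_latin_rect (rect_of_rows r) = proper_rows r.
Proof.
have row0 : [forall i : 'I_3, forall j, (val i == 0) ==> (val (rect_of_rows r (i, j)) == val j)].
  by apply/forallP => -[[|i] ?]; apply/forallP => j; rewrite ?ffunE /tnth /=.
have colP j : injective (fun i => rect_of_rows r (i, j)) <->
              [&& (r j).1 != j, (r j).2 != j & (r j).1 != (r j).2].
  have colE : (fun i => rect_of_rows r (i, j)) =1 tnth [tuple j; (r j).1; (r j).2].
    by move=> i; rewrite ffunE.
  have -> : [&& (r j).1 != j, (r j).2 != j & (r j).1 != (r j).2] =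
            uniq [tuple j; (r j).1; (r j).2].
    by rewrite /= !inE negb_or andbT -andbA !(eq_sym j).
  split=> [/eq_inj/(_ colE)/tuple_uniqP // | /tuple_uniqP/eq_inj]; apply; exact: fsym colE.
rewrite /reduced_latin_rect row0 andbT.
apply/latin_rectP/and3P => [[rows cols] | [inj1 inj2 /forallP distinct]].
  split; last by apply/forallP => j; apply/colP.
    apply/injectiveP => j1 j2 eq12; apply: (rows (@Ordinal 3 1 isT)).
    by rewrite /= !ffunE /tnth /= eq12.
  apply/injectiveP => j1 j2 eq12; apply: (rows (@Ordinal 3 2 isT)).
  by rewrite /= !ffunE /tnth /= eq12.
split=> [i | j]; last exact/colP/distinct.
case: i => -[|[|[|//]]] lt_i3 j1 j2; rewrite !ffunE /tnth //=.
  by move/injectiveP: inj1; apply.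
by move/injectiveP: inj2; apply.
Qed.

Lemma reduced_rectE L : reduced_latin_rect L -> L = rect_of_rows (rows_of_rect L).
Proof.
case/andP=> _ /forallP row0; apply/ffunP => -[i j]; rewrite !ffunE.
case: i => -[|[|[|//]]] lt_i3; rewrite /tnth /=.
  by apply/val_inj/eqP; have /forallP/(_ j) := row0 (Ordinal lt_i3).
all: by congr (L (_, j)); apply: val_inj.
Qed.

Lemma R3_card_proper_rows : R 3 n = #|[set r : {ffun 'I_n -> 'I_n * 'I_n} | proper_rows r]|.
Proof.
rewrite /R -(card_imset _ (can_inj rect_of_rowsK)); apply: eq_card => L; rewrite inE.
apply/idP/imsetP => [red_L | [r]]; last by rewrite inE -reduced_rect_of_rows => + ->.
exists (rows_of_rect L); last exact: reduced_rectE.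
by rewrite inE -reduced_rect_of_rows -reduced_rectE.
Qed.

End Rectangles.

Local Open Scope ring_scope.

Lemma natr_forall (R : comPzSemiRingType) (I : finType) (P : pred I) :
  [forall i, P i]%:R = \prod_i (P i)%:R :> R.
Proof.
case: forallP => [all_P | /forallP]; first by rewrite big1 // => i _; rewrite all_P.
by rewrite negb_forall => /existsP [i /negPf Pi]; rewrite (bigD1 i) //= Pi mul0r.
Qed.

Lemma natr_card_set (R : pzSemiRingType) (I : finType) (P : pred I) :
  #|[set i | P i]|%:R = \sum_i (P i)%:R :> R.
Proof.
by rewrite -sum1dep_card natr_sum big_mkcond; apply: eq_bigr => i _; case: (P i).
Qed.

Definition coloring_sign (Y : finType) (c : {ffun Y -> bool * bool}) : int :=
  \prod_y (-1) ^+ ((c y).1 + (c y).2)%N.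

Lemma indicator_andE (a b : bool) : (a && b)%:R =
  \sum_(t : bool * bool) (-1) ^+ (t.1 + t.2)%N * ((t.1 ==> ~~ a) && (t.2 ==> ~~ b))%:R :> int.
Proof. by rewrite big_pair_bool; case: a; case: b. Qed.

Lemma forall_andE (Y : finType) (a b : pred Y) : [forall y, a y && b y]%:R =
  \sum_(c : {ffun Y -> bool * bool})
    coloring_sign c * [forall y, ((c y).1 ==> ~~ a y) && ((c y).2 ==> ~~ b y)]%:R :> int.
Proof.
rewrite natr_forall (eq_bigr _ (fun y _ => indicator_andE (a y) (b y))) bigA_distr_bigA.
by apply: eq_bigr => c _; rewrite natr_forall -big_split.
Qed.

Definition coloring_weight (s00 s10 s01 s11 : nat) : int :=
  (-1) ^+ (s10 + s01 + 2 * s11)%N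
  * g (s00%:Z - 1) s10%:Z s01%:Z (s11%:Z + 1) ^+ s00
  * g s00%:Z (s10%:Z - 1) s01%:Z (s11%:Z + 1) ^+ s10
  * g s00%:Z s10%:Z (s01%:Z - 1) (s11%:Z + 1) ^+ s01
  * g s00%:Z s10%:Z s01%:Z s11%:Z ^+ s11.

Section Colorings.

Variable Y : finType.
Implicit Types (c : {ffun Y -> bool * bool}).

Lemma card_proper_rows : #|[set r : {ffun Y -> Y * Y} | proper_rows r]|%:R =
  \sum_(c : {ffun Y -> bool * bool}) coloring_sign c * (\prod_j #|allowed_pairs c j|)%:R :> int.
Proof.
rewrite natr_card_set; under eq_bigr do rewrite proper_rowsE -mulnb natrM forall_andE mulr_sumr.
rewrite exchange_big /=; apply: eq_bigr => c _.
rewrite -card_ffun_family natr_card_set mulr_sumr; apply: eq_bigr => r _.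
by rewrite -forall_allowed_pairs -mulnb natrM mulrCA.
Qed.

Lemma card_allowed_pairs c j :
  let k t := (fiber_card c t)%:R : int in
  let e t := (c j == t)%:R : int in
  #|allowed_pairs c j|%:R =
    g (k (false, false) - e (false, false)) (k (true, false) - e (true, false))
      (k (false, true) - e (false, true)) (k (true, true) - e (true, true) + 1).
Proof.
move=> k e.
pose S (P : pred (bool * bool)) := [set y | P (c y)] :\ j.
have -> : allowed_pairs c j =
    [set p in setX (S (fun t => ~~ t.1)) (S (fun t => ~~ t.2)) | p.1 != p.2].
  apply/setP => -[a b]; rewrite !inE /=.
  by case: (a != j); case: (b != j); case: (a != b); rewrite /= ?andbF ?andbT.
have cardS P : #|S P|%:R = \sum_(t | P t) k t - (P (c j))%:R.
  by rewrite -natr_sum -(card_preim_fibersD1 c P j) natrD addrK.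
have capS : S (fun t => ~~ t.1) :&: S (fun t => ~~ t.2) = S (pred1 (false, false)).
  by apply/setP => y; rewrite !inE; case: (y != j); case: (c y) => -[] [].
move: (card_distinct_pairs (S (fun t => ~~ t.1)) (S (fun t => ~~ t.2))); rewrite capS.
move/(congr1 (fun m => m%:R : int)); rewrite natrD natrM => /(canRL (addrK _)) ->.
rewrite !cardS; do 3 rewrite big_mkcond big_pair_bool /=; rewrite /e /g.
by case: (c j) => -[] []; rewrite /=; ring.
Qed.

Lemma coloring_weightE c :
  coloring_sign c * (\prod_j #|allowed_pairs c j|)%:R =
  coloring_weight (fiber_card c (false, false)) (fiber_card c (true, false))
                  (fiber_card c (false, true)) (fiber_card c (true, true)).
Proof.
set k := fiber_card c.
have -> : coloring_sign c = (-1) ^+ (k (true, false) + k (false, true) + 2 * k (true, true))%N.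
  rewrite /coloring_sign (prod_fibers c (fun t => (-1) ^+ (t.1 + t.2)%N)) big_pair_bool /=.
  by rewrite -!exprM -!exprD; congr (_ ^+ _); rewrite -/k; lia.
pose G t := g ((k (false, false))%:R - (t == (false, false))%:R)
  ((k (true, false))%:R - (t == (true, false))%:R) ((k (false, true))%:R - (t == (false, true))%:R)
  ((k (true, true))%:R - (t == (true, true))%:R + 1).
rewrite natr_prod (eq_bigr (fun j => G (c j))) => [|j _]; last exact: card_allowed_pairs.
rewrite (prod_fibers c G) big_pair_bool /G /coloring_weight /= -/k !natz !subr0 subrK.
ring.
Qed.

End Colorings.

Definition fiber_profile (a b c d : nat) (t : bool * bool) : nat :=
  match t with
  | (false, false) => a | (true, false) => b | (false, true) => c | (true, true) => d
  end.

Lemma card_with_fiber_profile n a b c d : #|with_fibers n (fiber_profile a b c d)| =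
  if (a + b + c + d == n)%N then (n`! %/ (a`! * b`! * c`! * d`!))%N else 0%N.
Proof.
rewrite card_with_fibers !big_pair_bool /=.
have -> : (d + b + (c + a) = a + b + c + d)%N by ring.
by have -> : (d`! * b`! * (c`! * a`!) = a`! * b`! * c`! * d`!)%N by ring.
Qed.

Lemma sum_ord_pick n k (P : bool) (G : 'I_n.+1 -> int) :
  (k <= n)%N -> \sum_(i < n.+1) (P && (k == i))%:R * G i = P%:R * G (inord k).
Proof.
move=> le_kn; rewrite (bigD1 (inord k)) //= inordK // eqxx andbT big1 ?addr0 // => i ne_i.
by case: (k =P i) => [ki | _]; [rewrite ki inord_val eqxx in ne_i | rewrite andbF mul0r].
Qed.

Lemma sum_by_fiber_profile n (F : nat -> nat -> nat -> nat -> int) :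
  let k (x : {ffun 'I_n -> bool * bool}) := fiber_card x in
  \sum_x F (k x (false, false)) (k x (true, false)) (k x (false, true)) (k x (true, true)) =
  \sum_(a < n.+1) \sum_(b < n.+1) \sum_(c < n.+1) \sum_(d < n.+1)
    #|with_fibers n (fiber_profile a b c d)|%:R * F a b c d.
Proof.
move=> k; symmetry.
under eq_bigr do under eq_bigr do under eq_bigr do under eq_bigr do
  rewrite natr_card_set mulr_suml.
under eq_bigr do under eq_bigr do under eq_bigr do rewrite exchange_big.
under eq_bigr do under eq_bigr do rewrite exchange_big.
under eq_bigr do rewrite exchange_big.
rewrite exchange_big /=; apply: eq_bigr => x _ /=.
have k_le t : (k x t <= n)%N by rewrite -[n]card_ord fiber_card_le.
under eq_bigr do under eq_bigr do under eq_bigr do under eq_bigr do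
  rewrite forall_pair_bool /= !andbA.
under eq_bigr do under eq_bigr do under eq_bigr do rewrite (sum_ord_pick _ _ (k_le _)).
under eq_bigr do under eq_bigr do rewrite (sum_ord_pick _ _ (k_le _)).
under eq_bigr do rewrite (sum_ord_pick _ _ (k_le _)).
rewrite (sum_ord_pick true) ?k_le // mul1r.
by rewrite !inordK ?ltnS ?k_le.
Qed.

Theorem mainTheorem1 (n : nat) (hn : (0 < n)%N) :
  (R 3 n)%:Z =
  \sum_(s00 < n.+1) \sum_(s10 < n.+1) \sum_(s01 < n.+1) \sum_(s11 < n.+1)
    if (s00 + s10 + s01 + s11 == n)%N then
      (-1) ^+ (s10 + s01 + 2 * s11)%N
      * ((n`! %/ (s00`! * s10`! * s01`! * s11`!))%N)%:Z
      * g (s00%:Z - 1) s10%:Z s01%:Z (s11%:Z + 1) ^+ s00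
      * g s00%:Z (s10%:Z - 1) s01%:Z (s11%:Z + 1) ^+ s10
      * g s00%:Z s10%:Z (s01%:Z - 1) (s11%:Z + 1) ^+ s01
      * g s00%:Z s10%:Z s01%:Z s11%:Z ^+ s11
    else 0.
Proof.
rewrite R3_card_proper_rows -natz card_proper_rows.
under eq_bigr do rewrite coloring_weightE.
rewrite sum_by_fiber_profile; do 4 apply: eq_bigr => ? _.
rewrite card_with_fiber_profile; case: ifP => _; last by rewrite mul0r.
by rewrite /coloring_weight natz; ring.
Qed.
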